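(* Every congruence-splitting lattice has permutable congruences.
   Context: For a lattice $L$ and $x,y\in L$, $\Theta(x,y)$ denotes the least congruence of $L$ identifying $x$ and $y$; $\operatorname{Con}L$ is the lattice of congruences of $L$. A lattice $L$ is congruence-splitting if for all $u\leq v$ in $L$ and all $\alpha,\beta\in\operatorname{Con}L$ with $\Theta(u,v)=\alpha\vee\beta$, there exist $x,y$ in the interval $[u,v]$ with $x\vee y=v$, $u\equiv_\alpha x$ and $u\equiv_\beta y$. A lattice has permutable congruences if $\alpha\beta=\beta\alpha$ for all congruences $\alpha,\beta$, where $\alpha\beta=\{(x,y): \exists z,\ (x,z)\in\alpha,\ (z,y)\in\beta\}$. *)

From mathcomp Require Import all_boot all_order.
Set Implicit Arguments. Unset Strict Implicit. Unset Printing Implicit Defensive.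
Import Order.TTheory.
Local Open Scope order_scope.

Definition rel_incl (T : Type) (a b : T -> T -> Prop) := forall x y, a x y -> b x y.
Definition rel_eq (T : Type) (a b : T -> T -> Prop) := forall x y, a x y <-> b x y.

Definition is_congruence (d : Order.disp_t) (L : latticeType d) (R : L -> L -> Prop) :=
  [/\ forall x, R x x,
      forall x y, R x y -> R y x,
      forall x y z, R x y -> R y z -> R x z,
      forall x y x' y', R x y -> R x' y' -> R (x `&` x') (y `&` y')
    & forall x y x' y', R x y -> R x' y' -> R (x `|` x') (y `|` y')].

Definition Theta (d : Order.disp_t) (L : latticeType d) (x y : L) : L -> L -> Prop :=
  fun a b => forall R, is_congruence R -> R x y -> R a b.

Definition cjoin (d : Order.disp_t) (L : latticeType d) (al be : L -> L -> Prop) : L -> L -> Prop :=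
  fun a b => forall R, is_congruence R -> rel_incl al R -> rel_incl be R -> R a b.

Definition rcomp (T : Type) (al be : T -> T -> Prop) : T -> T -> Prop :=
  fun x y => exists z, al x z /\ be z y.

Definition congruence_splitting (d : Order.disp_t) (L : latticeType d) :=
  forall (u v : L), u <= v ->
  forall al be : L -> L -> Prop, is_congruence al -> is_congruence be ->
  rel_eq (Theta u v) (cjoin al be) ->
  exists x y : L, [/\ u <= x <= v, u <= y <= v, x `|` y = v, al u x & be u y].

Definition permutable_congruences (d : Order.disp_t) (L : latticeType d) :=
  forall al be : L -> L -> Prop, is_congruence al -> is_congruence be ->
  rel_eq (rcomp al be) (rcomp be al).

From mathcomp Require Import all_boot all_order.
Import Order.TTheory.
Local Open Scope order_scope.

(* If u <= w <= v with al u w and be w v, then Theta(u,v) is the join of the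
   restrictions of al and be to Theta(u,v); splitting this join yields
   y in [u,v] with be u y and al y v, i.e. the two steps can be exchanged.
   Given al a c and be c b, one may assume a & b <= c <= a | b; three such
   exchanges, along a <= a | c <= a | b, a & b <= b & c <= b and
   b <= b | c <= a | b, give p, q, r from which e := (p | q) & r satisfies
   be a e and al e b. *)

Section Congruence.
Context {d : Order.disp_t} {L : latticeType d}.
Implicit Types (R al be : L -> L -> Prop) (u v w x y z : L).

Section Laws.
Context {R : L -> L -> Prop} (hR : is_congruence R).

Lemma cong_refl x : R x x.
Proof. by case: hR. Qed.

Lemma cong_sym {x y} : R x y -> R y x.
Proof. by case: hR => _ hsym *; apply: hsym. Qed.

Lemma cong_trans {x y z} : R x y -> R y z -> R x z.
Proof. by case: hR => _ _ htrans *; apply: (htrans _ y). Qed.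

Lemma cong_meet {x y x' y'} : R x y -> R x' y' -> R (x `&` x') (y `&` y').
Proof. by case: hR => _ _ _ hmeet _; apply: hmeet. Qed.

Lemma cong_join {x y x' y'} : R x y -> R x' y' -> R (x `|` x') (y `|` y').
Proof. by case: hR => _ _ _ _ hjoin; apply: hjoin. Qed.

Lemma cong_meetl z {x y} : R x y -> R (z `&` x) (z `&` y).
Proof. by move=> hxy; apply: cong_meet (cong_refl z) hxy. Qed.

Lemma cong_joinl z {x y} : R x y -> R (z `|` x) (z `|` y).
Proof. by move=> hxy; apply: cong_join (cong_refl z) hxy. Qed.

Lemma cong_interval {u w v} : u <= w -> w <= v -> R u v -> R u w /\ R w v.
Proof.
move=> huw hwv huv; split.
- by have := cong_meet huv (cong_refl w); rewrite (meet_l huw) (meet_r hwv).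
- by have := cong_join huv (cong_refl w); rewrite (join_r huw) (join_l hwv).
Qed.

End Laws.

Lemma is_congruence_inter {al be} : is_congruence al -> is_congruence be ->
  is_congruence (fun x y => al x y /\ be x y).
Proof.
move=> ha hb; split.
- by move=> x; split; apply: cong_refl.
- by move=> x y [] *; split; apply: cong_sym.
- by move=> x y z [? ?] [? ?]; split; apply: cong_trans; eassumption.
- by move=> x y x' y' [? ?] [? ?]; split; apply: cong_meet.
- by move=> x y x' y' [? ?] [? ?]; split; apply: cong_join.
Qed.

Lemma is_congruence_Theta u v : is_congruence (Theta u v).
Proof.
split.
- by move=> x R hR _; apply: cong_refl.
- by move=> x y hxy R hR huv; apply: cong_sym (hxy R hR huv).
- by move=> x y z hxy hyz R hR huv; apply: cong_trans (hxy R hR huv) (hyz R hR huv).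
- by move=> x y x' y' hxy hx'y' R hR huv; apply: cong_meet (hxy R hR huv) (hx'y' R hR huv).
- by move=> x y x' y' hxy hx'y' R hR huv; apply: cong_join (hxy R hR huv) (hx'y' R hR huv).
Qed.

Lemma Theta_eq_cjoin al be u w v :
  rel_incl al (Theta u v) -> rel_incl be (Theta u v) -> al u w -> be w v ->
  rel_eq (Theta u v) (cjoin al be).
Proof.
move=> alT beT haw hbw x y; split => [hxy R hR alR beR | hxy].
- by apply: hxy => //; apply: cong_trans (alR _ _ haw) (beR _ _ hbw).
- exact: hxy (is_congruence_Theta u v) alT beT.
Qed.

Lemma splitting_exchange {al be u w v} :
  congruence_splitting L -> is_congruence al -> is_congruence be ->
  u <= w -> w <= v -> al u w -> be w v ->
  exists y, [/\ u <= y, y <= v, be u y & al y v].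
Proof.
move=> hsplit ha hb huw hwv haw hbw.
have huv : u <= v by apply: le_trans hwv.
have [Tuw Twv] : Theta u v u w /\ Theta u v w v.
  by apply: (cong_interval (is_congruence_Theta u v)) => // R.
have hT := Theta_eq_cjoin (fun x y => al x y /\ Theta u v x y)
  (fun x y => be x y /\ Theta u v x y) u w v (fun _ _ => @proj2 _ _) (fun _ _ => @proj2 _ _)
  (conj haw Tuw) (conj hbw Twv).
have [x [y [_ /andP[huy hyv] hxy [hax _] [hby _]]]] :=
  hsplit u v huv _ _ (is_congruence_inter ha (is_congruence_Theta u v))
    (is_congruence_inter hb (is_congruence_Theta u v)) hT.
exists y; split => //.
by have := cong_join ha hax (cong_refl ha y); rewrite hxy (join_r huy).
Qed.

Lemma rcomp_bounded {al be x y} : is_congruence al -> is_congruence be ->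
  rcomp al be x y ->
  exists z, [/\ x `&` y <= z, z <= x `|` y, al x z & be z y].
Proof.
move=> ha hb [z [hxz hzy]].
exists ((z `|` (x `&` y)) `&` (x `|` y)); split.
- by rewrite lexI leUr (le_trans (leIl _ _) (leUl _ _)).
- exact: leIr.
- have := cong_meet ha (cong_join ha hxz (cong_refl ha (x `&` y))) (cong_refl ha (x `|` y)).
  by rewrite (join_l (leIl _ _)) (meet_l (leUl _ _)).
- have := cong_meet hb (cong_join hb hzy (cong_refl hb (x `&` y))) (cong_refl hb (x `|` y)).
  by rewrite (join_l (leIr _ _)) (meet_l (leUr _ _)).
Qed.

Lemma splitting_rcomp_swap {al be x y z} :
  congruence_splitting L -> is_congruence al -> is_congruence be ->
  x `&` y <= z -> z <= x `|` y -> al x z -> be z y -> rcomp be al x y.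
Proof.
move=> hsplit ha hb hlo hhi hxz hzy.
have [p [_ _ hxp hpj]] : exists p, [/\ x <= p, p <= x `|` y, be x p & al p (x `|` y)].
  apply: (splitting_exchange hsplit ha hb (w := x `|` z)).
  - exact: leUl.
  - by rewrite leUx leUl.
  - by have := cong_joinl ha x hxz; rewrite joinxx.
  - exact: cong_joinl.
have [q [_ _ hmq hqy]] : exists q, [/\ x `&` y <= q, q <= y, be (x `&` y) q & al q y].
  apply: (splitting_exchange hsplit ha hb (w := y `&` z)).
  - by rewrite lexI leIr.
  - exact: leIl.
  - by have := cong_meetl ha y hxz; rewrite meetC.
  - by have := cong_meetl hb y hzy; rewrite meetxx.
have [r [_ hrj hyr hrj']] : exists r, [/\ y <= r, r <= x `|` y, al y r & be r (x `|` y)].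
  apply: (splitting_exchange hsplit hb ha (w := y `|` z)).
  - exact: leUl.
  - by rewrite leUx leUr.
  - by have := cong_joinl hb y (cong_sym hb hzy); rewrite joinxx.
  - by rewrite [x `|` y]joinC; apply/cong_joinl/(cong_sym ha).
exists ((p `|` q) `&` r); split.
- have := cong_meet hb (cong_join hb hxp hmq) (cong_sym hb hrj').
  by rewrite (join_l (leIl _ _)) (meet_l (leUl _ _)).
- have := cong_meet ha (cong_join ha hpj hqy) (cong_refl ha r).
  rewrite (join_l (leUr _ _)) (meet_r hrj) => hpqr.
  exact: (cong_trans ha hpqr (cong_sym ha hyr)).
Qed.

End Congruence.

Theorem theorem1p2 (d : Order.disp_t) (L : latticeType d) :
  congruence_splitting L -> permutable_congruences L.
Proof.
move=> hsplit.
suff swap al be : is_congruence al -> is_congruence be ->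
    forall x y : L, rcomp al be x y -> rcomp be al x y.
  by move=> al be ha hb x y; split; apply: swap.
move=> ha hb x y hxy.
have [z [hlo hhi hxz hzy]] := rcomp_bounded ha hb hxy.
exact: splitting_rcomp_swap hsplit ha hb hlo hhi hxz hzy.
Qed.
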